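(* Let $a_1,\dots,a_n$ and $b_1,\dots,b_n$ be mutually commuting families of bosonic operators ($[a_i,a_j^\dagger]=[b_i,b_j^\dagger]=\delta_{ij}$, all other commutators among $a_i,a_i^\dagger,b_j,b_j^\dagger$ zero), and let $H=\sum_{i,j=1}^n\left(\alpha_{ij}a_i^\dagger a_j+\varepsilon_{ij}b_i^\dagger b_j+\gamma_{ij}a_i^\dagger b_j^\dagger+\gamma_{ji}^*a_ib_j\right)$ with $\alpha,\varepsilon$ complex Hermitian and $\gamma$ complex with $\gamma^T=\gamma$. Let $\psi=(a_1,\dots,a_n,b_1^\dagger,\dots,b_n^\dagger)^T$ and let $D$ be the $2n\times2n$ dynamic matrix determined by $[\psi_\mu,H]=\sum_\nu D_{\mu\nu}\psi_\nu$. Then $H$ is BV diagonalizable if and only if $D$ is physically diagonalizable.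
   Context: Here $H$ is called BV diagonalizable if there exist $2n$ operators $e_1,\dots,e_{2n}$, each a complex linear combination of $a_i,a_i^\dagger,b_i,b_i^\dagger$, satisfying the standard bosonic relations $[e_k,e_l^\dagger]=\delta_{kl}$, $[e_k,e_l]=0$, and real numbers $\lambda_1,\dots,\lambda_{2n},C$ with $H=\sum_k\lambda_ke_k^\dagger e_k+C$. A matrix is physically diagonalizable if it is diagonalizable over $\mathbb{C}$ and all its eigenvalues are real. *)

From HB Require Import structures.
From mathcomp Require Import all_boot all_order all_algebra.
Set Implicit Arguments. Unset Strict Implicit. Unset Printing Implicit Defensive.
Import Order.TTheory GRing.Theory Num.Theory.
Local Open Scope ring_scope.

(* Complex scalars: an arbitrary numClosedFieldType C (e.g. algC), with
   complex conjugation z^* and the real elements [Num.real].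
   The operator algebra: an arbitrary C-algebra A with 1 != 0 (algType is
   a nzRingType).  The bosonic modes are elements
   a i, ad i (= a_i^dagger), b i, bd i (= b_i^dagger) of A. *)

Definition comm (C : numClosedFieldType) (A : algType C) (x y : A) : A :=
  x * y - y * x.

Definition CCR (C : numClosedFieldType) (A : algType C) (n : nat)
    (a ad b bd : 'I_n -> A) : Prop :=
  forall i j : 'I_n,
    [/\ comm (a i) (ad j) = (i == j)%:R, comm (b i) (bd j) = (i == j)%:R,
        comm (a i) (a j) = 0, comm (ad i) (ad j) = 0 &
        [/\ comm (b i) (b j) = 0, comm (bd i) (bd j) = 0,
            comm (a i) (b j) = 0, comm (a i) (bd j) = 0 &
            [/\ comm (ad i) (b j) = 0 & comm (ad i) (bd j) = 0]]].

Definition lincomb (C : numClosedFieldType) (A : algType C) (n : nat)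
    (a ad b bd : 'I_n -> A) (p q r s : 'I_n -> C) : A :=
  \sum_(i < n) (p i *: a i + q i *: ad i + r i *: b i + s i *: bd i).

(* its adjoint (the dagger is antilinear and swaps x with x^dag) *)
Definition lincomb_adj (C : numClosedFieldType) (A : algType C) (n : nat)
    (a ad b bd : 'I_n -> A) (p q r s : 'I_n -> C) : A :=
  lincomb a ad b bd (fun i => (q i)^*) (fun i => (p i)^*)
                    (fun i => (s i)^*) (fun i => (r i)^*).

Definition hamiltonian (C : numClosedFieldType) (A : algType C) (n : nat)
    (a ad b bd : 'I_n -> A) (alpha eps gamma : 'M[C]_n) : A :=
  \sum_(i < n) \sum_(j < n)
    (alpha i j *: (ad i * a j) + eps i j *: (bd i * b j)
     + gamma i j *: (ad i * bd j) + (gamma j i)^* *: (a i * b j)).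

Definition psi (C : numClosedFieldType) (A : algType C) (n : nat)
    (a bd : 'I_n -> A) (mu : 'I_(n + n)) : A :=
  match split mu with inl i => a i | inr i => bd i end.

Definition is_dynamic_matrix (C : numClosedFieldType) (A : algType C) (n : nat)
    (a bd : 'I_n -> A) (H : A) (D : 'M[C]_(n + n)) : Prop :=
  forall mu : 'I_(n + n),
    comm (psi a bd mu) H = \sum_(nu < n + n) D mu nu *: psi a bd nu.

Definition BV_diagonalizable (C : numClosedFieldType) (A : algType C) (n : nat)
    (a ad b bd : 'I_n -> A) (H : A) : Prop :=
  exists (P Q R S : 'I_(n + n) -> 'I_n -> C) (lambda : 'I_(n + n) -> C) (c : C),
    let e k := lincomb a ad b bd (P k) (Q k) (R k) (S k) in
    let edag k := lincomb_adj a ad b bd (P k) (Q k) (R k) (S k) in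
    [/\ forall k l, comm (e k) (edag l) = (k == l)%:R,
        forall k l, comm (e k) (e l) = 0,
        forall k, lambda k \is Num.real,
        c \is Num.real &
        H = \sum_(k < n + n) lambda k *: (edag k * e k) + c%:A].

Definition phys_diagonalizable (C : numClosedFieldType) (m : nat) (D : 'M[C]_m) : Prop :=
  diagonalizable D /\ forall x : C, eigenvalue D x -> x \is Num.real.

From HB Require Import structures.
From mathcomp Require Import all_boot all_order all_algebra ring.
Set Implicit Arguments. Unset Strict Implicit. Unset Printing Implicit Defensive.
Import Order.TTheory GRing.Theory Num.Theory Num.Def.
Local Open Scope ring_scope.
Local Open Scope sesquilinear_scope.

(* Write psi^dag = (a^dag, b), eta = diag(1, -1), and K for the Hermitian matrix with
   H = psi^dag K psi + c0.  The CCR read [psi_mu, psi^dag_nu] = eta_mu_nu, so D = eta K,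
   and for real lam, e = u.psi + w.psi^dag satisfies [e, H] = lam e iff u D = lam u and
   w^* D = -lam w^*.
   If H is BV diagonalized by e_k = u_k.psi + w_k.psi^dag, the CCR of the e_k make the
   coefficient matrix [[U, W], [W^*, U^*]] pseudo-unitary, hence invertible, so the rows
   u_k and w_k^* are a spanning family of eigenvectors of D with real eigenvalues.
   Conversely, if P D P^-1 is real diagonal, then P eta P^dag is Hermitian and commutes
   with it; diagonalizing both by one unitary matrix and rescaling gives U with
   U eta U^dag = diag(+-1) and U D U^-1 real diagonal.  A row u of sign +1 yields the
   annihilator u.psi, a row of sign -1 the annihilator (u.psi)^dag. *)

Local Notation "A ^c" := (map_mx conjC A) : ring_scope.

Lemma split_lshift m n (i : 'I_m) : split (lshift n i) = inl i.
Proof. exact: (unsplitK (inl i : 'I_m + 'I_n)). Qed.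
Lemma split_rshift m n (i : 'I_n) : split (rshift m i) = inr i.
Proof. exact: (unsplitK (inr i : 'I_m + 'I_n)). Qed.

Section Commutator.
Variables (C : numClosedFieldType) (A : algType C).
Implicit Types (x y z : A) (c : C).

Lemma commDl x y z : comm (x + y) z = comm x z + comm y z.
Proof. by rewrite /comm mulrDr mulrDl opprD addrACA. Qed.
Lemma commDr x y z : comm x (y + z) = comm x y + comm x z.
Proof. by rewrite /comm mulrDr mulrDl opprD addrACA. Qed.
Lemma commZl c x y : comm (c *: x) y = c *: comm x y.
Proof. by rewrite /comm scalerBr -scalerAl -scalerAr. Qed.
Lemma commZr c x y : comm x (c *: y) = c *: comm x y.
Proof. by rewrite /comm scalerBr -scalerAl -scalerAr. Qed.
Lemma commC x y : comm y x = - comm x y.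
Proof. by rewrite /comm opprB. Qed.
Lemma comm_suml I (r : seq I) (P : pred I) (F : I -> A) x :
  comm (\sum_(i <- r | P i) F i) x = \sum_(i <- r | P i) comm (F i) x.
Proof. by rewrite /comm mulr_sumr mulr_suml -sumrB. Qed.
Lemma comm_sumr I (r : seq I) (P : pred I) (F : I -> A) x :
  comm x (\sum_(i <- r | P i) F i) = \sum_(i <- r | P i) comm x (F i).
Proof. by rewrite /comm mulr_sumr mulr_suml -sumrB. Qed.
Lemma commMr x y z : comm x (y * z) = comm x y * z + y * comm x z.
Proof. by rewrite /comm mulrBl mulrBr !mulrA addrA subrK. Qed.
Lemma comm_alg x c : comm x c%:A = 0.
Proof. by rewrite commZr /comm mulr1 mul1r subrr scaler0. Qed.
Lemma mul_commE x y : x * y = y * x + comm x y.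
Proof. by rewrite /comm addrC subrK. Qed.

End Commutator.

Section BilinearForm.
Variables (F : fieldType) (N : nat).
Implicit Types (u v : 'rV[F]_N) (M : 'M[F]_N).

Definition bform u M v : F := (u *m M *m v^T) 0 0.

Lemma bformE u M v : bform u M v = \sum_i \sum_j u 0 i * M i j * v 0 j.
Proof.
rewrite /bform mxE exchange_big /=; apply: eq_bigr => i _.
by rewrite mxE big_distrl /=; apply: eq_bigr => j _; rewrite !mxE.
Qed.

Lemma bform_tr u M v : bform u M v = bform v M^T u.
Proof.
rewrite !bformE exchange_big /=; apply: eq_bigr => i _; apply: eq_bigr => j _.
by rewrite mxE; ring.
Qed.

Lemma bform_delta u M j : bform u M (delta_mx 0 j) = (u *m M) 0 j.
Proof.
rewrite /bform mxE (bigD1 j) //= big1 => [|k /negbTE nkj]; rewrite !mxE ?eqxx.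
  by rewrite mulr1 addr0.
by rewrite nkj mulr0.
Qed.

Lemma bform0l M v : bform 0 M v = 0.
Proof. by rewrite /bform !mul0mx mxE. Qed.
Lemma bform0r u M : bform u M 0 = 0.
Proof. by rewrite /bform trmx0 mulmx0 mxE. Qed.
Lemma bform0 u v : bform u 0 v = 0.
Proof. by rewrite /bform mulmx0 mul0mx mxE. Qed.

Lemma mulmx_trE (U W : 'M[F]_N) M k l :
  (U *m M *m W^T) k l = bform (row k U) M (row l W).
Proof.
rewrite /bform !mxE; apply: eq_bigr => j _; rewrite !mxE; congr (_ * _).
by apply: eq_bigr => i _; rewrite !mxE.
Qed.

End BilinearForm.

Lemma bform_conj (C : numClosedFieldType) N (u v : 'rV[C]_N) (M : 'M[C]_N) :
  (bform u M v)^* = bform u^c M^c v^c.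
Proof.
rewrite !bformE rmorph_sum; apply: eq_bigr => i _; rewrite rmorph_sum.
by apply: eq_bigr => j _; rewrite !rmorphM !mxE.
Qed.

Section ModeOperators.
Variables (C : numClosedFieldType) (A : algType C) (N : nat).
Implicit Types (f g : 'I_N -> A) (u v w : 'rV[C]_N) (M : 'M[C]_N).

Definition lcomb f u : A := \sum_i u 0 i *: f i.

Lemma lcomb0 f : lcomb f 0 = 0.
Proof. by rewrite /lcomb big1 // => i _; rewrite mxE scale0r. Qed.
Lemma lcombD f u v : lcomb f (u + v) = lcomb f u + lcomb f v.
Proof. by rewrite /lcomb -big_split; apply: eq_bigr => i _; rewrite mxE scalerDl. Qed.
Lemma lcombZ f c u : lcomb f (c *: u) = c *: lcomb f u.
Proof. by rewrite /lcomb scaler_sumr; apply: eq_bigr => i _; rewrite mxE scalerA. Qed.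
Lemma lcombB f u v : lcomb f (u - v) = lcomb f u - lcomb f v.
Proof. by rewrite lcombD -scaleN1r lcombZ scaleN1r. Qed.

Lemma lcomb_delta f i : lcomb f (delta_mx 0 i) = f i.
Proof.
rewrite /lcomb (bigD1 i) //= big1 ?addr0 => [|j /negbTE ji]; rewrite mxE ?eqxx ?scale1r //.
by rewrite ji scale0r.
Qed.

Lemma lcomb_mulmx f u M :
  \sum_r u 0 r *: \sum_i M r i *: f i = lcomb f (u *m M).
Proof.
rewrite /lcomb; under eq_bigr do rewrite scaler_sumr.
rewrite exchange_big /=; apply: eq_bigr => i _.
by rewrite mxE scaler_suml; apply: eq_bigr => r _; rewrite scalerA.
Qed.

Lemma comm_lcomb f g M u v :
    (forall i j, comm (f i) (g j) = (M i j)%:A) ->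
  comm (lcomb f u) (lcomb g v) = (bform u M v)%:A.
Proof.
move=> fg; rewrite bformE comm_suml scaler_suml; apply: eq_bigr => i _.
rewrite commZl comm_sumr scaler_suml scaler_sumr; apply: eq_bigr => j _.
by rewrite commZr fg !scalerA; congr (_ *: _); ring.
Qed.

Variables (p d : 'I_N -> A) (E : 'M[C]_N).
Hypotheses (pp : forall i j, comm (p i) (p j) = 0)
           (dd : forall i j, comm (d i) (d j) = 0)
           (pd : forall i j, comm (p i) (d j) = (E i j)%:A)
           (Esym : E^T = E) (EE : E *m E = 1%:M).

Definition linop u w : A := lcomb p u + lcomb d w.
Definition quad M : A := \sum_i \sum_j M i j *: (d i * p j).

Lemma linop0l w : linop 0 w = lcomb d w. Proof. by rewrite /linop lcomb0 add0r. Qed.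
Lemma linop0r u : linop u 0 = lcomb p u. Proof. by rewrite /linop lcomb0 addr0. Qed.
Lemma linopB u w u' w' : linop (u - u') (w - w') = linop u w - linop u' w'.
Proof. by rewrite /linop !lcombB opprD addrACA. Qed.
Lemma linopZ c u w : linop (c *: u) (c *: w) = c *: linop u w.
Proof. by rewrite /linop !lcombZ scalerDr. Qed.

Lemma comm_linop u w u' w' :
  comm (linop u w) (linop u' w') = (bform u E w' - bform w E u')%:A.
Proof.
have comm0 f (ff : forall i j, comm (f i) (f j) = 0) x y :
    comm (lcomb f x) (lcomb f y) = 0.
  by rewrite (@comm_lcomb _ _ 0) ?bform0 ?scale0r // => i j; rewrite ff mxE scale0r.
rewrite /linop commDl !commDr !comm0 // (comm_lcomb _ _ pd) commC (comm_lcomb _ _ pd).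
by rewrite add0r addr0 scalerBl (bform_tr u') Esym.
Qed.

Lemma linop_inj u w u' w' : linop u w = linop u' w' -> u = u' /\ w = w'.
Proof.
move/eqP; rewrite -subr_eq0 -linopB; set x := u - u'; set y := w - w'.
move=> /eqP xy0; suff [/eqP + /eqP] : x = 0 /\ y = 0 by rewrite !subr_eq0 => /eqP -> /eqP ->.
have E_inj z : z *m E = 0 -> z = 0.
  by move=> zE0; rewrite -[z]mulmx1 -EE mulmxA zE0 mul0mx.
have comm0 u1 w1 : comm (linop x y) (linop u1 w1) = 0 by rewrite xy0 /comm mul0r mulr0 subrr.
split; apply: E_inj; apply/rowP => j; rewrite [RHS]mxE.
  apply/(fmorph_inj (in_alg A)); rewrite /= scale0r.
  by have := comm0 0 (delta_mx 0 j); rewrite comm_linop bform_delta bform0r subr0.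
apply/(fmorph_inj (in_alg A)); rewrite /= scale0r.
have := comm0 (delta_mx 0 j) 0; rewrite comm_linop bform0r sub0r.
by rewrite bform_delta => /eqP; rewrite scaleNr oppr_eq0 => /eqP.
Qed.

Lemma comm_linop_quad u w M :
  comm (linop u w) (quad M) = linop (u *m (E *m M)) (w *m - (M *m E)^T).
Proof.
have commp r : comm (p r) (quad M) = \sum_i (E *m M) r i *: p i.
  transitivity (\sum_i \sum_j (E r i * M i j) *: p j).
    rewrite comm_sumr; apply: eq_bigr => i _; rewrite comm_sumr; apply: eq_bigr => j _.
    by rewrite commZr commMr pp mulr0 addr0 pd -scalerAl mul1r scalerA mulrC.
  by rewrite exchange_big /=; apply: eq_bigr => j _; rewrite mxE scaler_suml.
have commd r : comm (d r) (quad M) = \sum_i (- (M *m E)^T) r i *: d i.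
  rewrite comm_sumr; apply: eq_bigr => i _; rewrite !mxE scaleNr scaler_suml -sumrN.
  rewrite comm_sumr; apply: eq_bigr => j _.
  by rewrite commZr commMr dd mul0r add0r commC pd mulrN -scalerAr mulr1 scalerN scalerA.
rewrite /linop commDl /lcomb !comm_suml.
under eq_bigr do rewrite commZl commp.
under [X in _ + X]eq_bigr do rewrite commZl commd.
by rewrite !lcomb_mulmx.
Qed.

Lemma quadD M M' : quad (M + M') = quad M + quad M'.
Proof.
rewrite /quad -big_split; apply: eq_bigr => i _; rewrite -big_split.
by apply: eq_bigr => j _; rewrite mxE scalerDl.
Qed.
Lemma quadZ c M : quad (c *: M) = c *: quad M.
Proof.
rewrite /quad scaler_sumr; apply: eq_bigr => i _; rewrite scaler_sumr.
by apply: eq_bigr => j _; rewrite mxE scalerA.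
Qed.
Lemma quad_sum (I : finType) (F : I -> 'M[C]_N) :
  quad (\sum_k F k) = \sum_k quad (F k).
Proof.
apply: (big_morph _ quadD).
by rewrite /quad big1 // => i _; rewrite big1 // => j _; rewrite mxE scale0r.
Qed.

Lemma mul_lcomb_quad u w : lcomb d w * lcomb p u = quad (w^T *m u).
Proof.
rewrite /lcomb /quad mulr_suml; apply: eq_bigr => i _; rewrite mulr_sumr.
apply: eq_bigr => j _; rewrite mxE big_ord1 !mxE -scalerAl -scalerAr scalerA.
by rewrite mulrC.
Qed.

End ModeOperators.

Section EigenspaceSum.
Variables (F : fieldType) (m : nat) (D : 'M[F]_m).

Lemma eigenspace_sub_sum rs r : r \in rs ->
  (eigenspace D r <= \sum_(r0 <- rs) eigenspace D r0)%MS.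
Proof.
elim: rs => // r0 rs IH; rewrite inE big_cons => /orP [/eqP -> | /IH h].
  exact: addsmxSl.
exact: submx_trans h (addsmxSr _ _).
Qed.

Lemma sum_eigenspace_sub rs (T : 'M[F]_m) :
    (forall r, r \in rs -> (eigenspace D r <= T)%MS) ->
  (\sum_(r0 <- rs) eigenspace D r0 <= T)%MS.
Proof.
elim: rs => [|r0 rs IH] h; first by rewrite big_nil sub0mx.
by rewrite big_cons addsmx_sub h ?mem_head //= IH // => r hr; rewrite h // inE hr orbT.
Qed.

(* The eigenspaces of x :: rs form a direct sum which is already full without
   the summand of x. *)
Lemma eigenvalue_mem_full_sum rs x : uniq rs ->
  (\sum_(r <- rs) eigenspace D r :=: 1%:M)%MS -> eigenvalue D x -> x \in rs.
Proof.
move=> urs full_rs; apply: contraTT => xNrs.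
set s := x :: rs; have us : uniq s by rewrite /= xNrs urs.
have nth_inj : {in predT &, injective (fun i : 'I_(size s) => nth x s i)}.
  by move=> i j _ _ /eqP; rewrite nth_uniq // => /eqP; apply: val_inj.
have /mxdirect_sumsP/(_ ord0 isT) := mxdirect_sum_eigenspace D nth_inj.
set T := (\sum_(j | _) _)%MS => capT.
have sub1T : (1%:M <= T)%MS.
  rewrite -full_rs; apply: sum_eigenspace_sub => r r_rs.
  have r_s : (index r s < size s)%N by rewrite index_mem inE r_rs orbT.
  apply: (sumsmx_sup (Ordinal r_s)); last by rewrite nth_index // inE r_rs orbT.
  by rewrite -val_eqE /= eqn0Ngt negbK /=; case: eqP => // xr; rewrite xr r_rs in xNrs.
rewrite /eigenvalue negbK -submx0 -capT sub_capmx submx_refl /=.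
exact: submx_trans (submx1 _) sub1T.
Qed.

End EigenspaceSum.

Lemma mulmx_diag_rows (R : comNzRingType) m n (A B : 'M[R]_(m, n)) (d : 'rV_m) :
  A^T *m diag_mx d *m B = \sum_k d 0 k *: ((row k A)^T *m row k B).
Proof.
apply/matrixP => i j; rewrite summxE mul_mx_diag mxE; apply: eq_bigr => k _.
by rewrite !mxE big_ord1 !mxE mulrAC mulrC.
Qed.

Section ComplexMatrices.
Variable C : numClosedFieldType.

Lemma row_full_eigenrows_phys_diagonalizable m n (Y : 'M[C]_(m, n)) (D : 'M[C]_n)
    (ev : 'I_m -> C) :
    row_full Y -> (forall k, row k Y *m D = ev k *: row k Y) ->
    (forall k, ev k \is Num.real) ->
  phys_diagonalizable D.
Proof.
move=> Yfull Yeig ev_real; pose rs := undup [seq ev k | k <- enum 'I_m].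
have full_rs : (\sum_(r <- rs) eigenspace D r :=: 1%:M)%MS.
  apply/eqmxP/andP; split; first exact: submx1.
  apply: (submx_trans (_ : 1%:M <= Y)%MS); first by rewrite sub1mx.
  apply/row_subP => k; apply: (submx_trans (_ : row k Y <= eigenspace D (ev k))%MS).
    exact/eigenspaceP.
  by apply: eigenspace_sub_sum; rewrite mem_undup map_f ?mem_enum.
split; first by apply/diagonalizablePeigen; exists rs; rewrite ?undup_uniq.
move=> x /(eigenvalue_mem_full_sum (undup_uniq _) full_rs).
by rewrite mem_undup => /mapP [k _ ->].
Qed.

Lemma pseudo_unitary_row_full n (E U W : 'M[C]_n) :
    E^T = E -> E^c = E ->
    U *m E *m W^T = W *m E *m U^T ->
    U *m E *m U^t* - W *m E *m W^t* = 1%:M ->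
  row_full (col_mx U W^c).
Proof.
move=> Esym Ereal UW UU.
have UWc : U^c *m E *m W^t* = W^c *m E *m U^t*.
  by rewrite -[E]Ereal -!map_mxM UW.
have UUt : U^c *m E *m U^T - W^c *m E *m W^T = 1%:M.
  by rewrite -[RHS]trmx1 -UU linearB /= !trmx_mul !map_trmx !trmxK Esym !mulmxA.
pose X := block_mx U W W^c U^c.
pose J : 'M[C]_(n + n) := block_mx 0 1%:M (- 1%:M) 0.
(* The hypotheses UW and UU, in block form. *)
have XJ : X *m (block_mx 0 E (- E) 0 *m X^T) = J.
  rewrite /X tr_block_mx !mulmx_block !mul0mx !add0r !addr0 !mulNmx !mulmxN !mulmxA.
  rewrite !map_trmx; congr block_mx.
  - by rewrite UW subrr.
  - exact: UU.
  - by rewrite -UUt opprB.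
  - by rewrite UWc subrr.
have JJ : J *m - J = 1%:M.
  rewrite /J mulmxN mulmx_block !mulmx0 !mul0mx !mulmx1 !mul1mx !addr0 !add0r.
  by rewrite opp_block_mx !opprK oppr0 -scalar_mx_block.
have Xu : X \in unitmx.
  have XJJ : X *m (block_mx 0 E (- E) 0 *m X^T *m - J) = 1%:M by rewrite mulmxA XJ.
  by have [] := mulmx1_unit XJJ.
have -> : col_mx U W^c = X *m col_mx 1%:M 0 by rewrite mul_block_col !mulmx1 !mulmx0 !addr0.
apply/row_fullP; exists (row_mx 1%:M 0 *m invmx X).
by rewrite mulmxA -(mulmxA _ (invmx X)) mulVmx // mulmx1 mul_row_col mulmx1 mulmx0 addr0.
Qed.

Lemma hermitian_congruence m n (P : 'M[C]_(m, n)) T : T^t* = T ->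
  (P *m T *m P^t*)^t* = P *m T *m P^t*.
Proof. by move=> hT; rewrite !trmx_mul !map_mxM /= hT trmxCK mulmxA. Qed.

Lemma hermitian_trig_real_diag n (T : 'M[C]_n) : T^t* = T -> is_trig_mx T ->
  exists2 t : 'rV_n, t \is a realmx & T = diag_mx t.
Proof.
move=> hT /is_trig_mxP Ttrig; have Tdiag : is_diag_mx T.
  apply/is_diag_mxP => i j; rewrite neq_ltn => /orP [] ij; first exact: Ttrig.
  by rewrite -hT !mxE Ttrig ?conjC0.
have [t Tt] := diag_mxP _ Tdiag; exists t => //.
apply/mxOverP => i k; rewrite ord1; apply/CrealP.
by have := congr1 (fun M : 'M[C]_n => M k k) hT; rewrite Tt !mxE eqxx mulr1n.
Qed.

Lemma diag_realmx_hermitian n (t : 'rV[C]_n) : t \is a realmx ->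
  (diag_mx t)^t* = diag_mx t.
Proof. by move=> /realmxC tR; rewrite tr_diag_mx map_diag_mx tR. Qed.

Lemma hermitian_codiagonalization n (G L : 'M[C]_n) :
    G^t* = G -> L^t* = L -> G *m L = L *m G ->
  exists2 P, P \is unitarymx & exists t l : 'rV_n,
    [/\ t \is a realmx, l \is a realmx,
        P *m G *m P^t* = diag_mx t & P *m L *m P^t* = diag_mx l].
Proof.
move=> hG hL /cotrigonalization2 [P Punitary /andP [PG PL]].
exists P => //; rewrite /similar_to !conjumx ?unitarymx_unit // !invmx_unitary // in PG PL.
have [t tR Gt] := hermitian_trig_real_diag (hermitian_congruence P hG) PG.
have [l lR Ll] := hermitian_trig_real_diag (hermitian_congruence P hL) PL.
by exists t, l.
Qed.

Lemma phys_diagonalizable_real_similar n (D : 'M[C]_n) : phys_diagonalizable D ->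
  exists2 P, P \in unitmx & exists2 d : 'rV_n, d \is a realmx & P *m D = diag_mx d *m P.
Proof.
move=> [[P Pu /similar_diagPex [d /(similarP Pu) PD]] Dreal].
exists P => //; exists d => //; apply/mxOverP => i k; rewrite ord1; apply: Dreal.
apply/eigenvalueP; exists (row k P); last first.
  apply/eqP => /(congr1 (mulmx^~ (invmx P))) /=.
  rewrite -row_mul mulmxV // mul0mx row1 => /rowP /(_ k).
  by rewrite !mxE !eqxx => /eqP; rewrite oner_eq0.
by rewrite -row_mul PD row_mul row_diag_mx -scalemxAl -rowE.
Qed.

Lemma real_diag_normalization n (t : 'rV[C]_n) :
    t \is a realmx -> (forall k, t 0 k != 0) ->
  exists2 s : 'rV_n, s \is a realmx &
    diag_mx s *m diag_mx t *m diag_mx s = diag_mx (\row_k (-1) ^+ (t 0 k < 0)%R).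
Proof.
move=> /mxOverP tR tnz; exists (\row_k (sqrtC `|t 0 k|)^-1).
  by apply/mxOverP => i k; rewrite mxE ger0_real // invr_ge0 sqrtC_ge0.
rewrite !mulmx_diag; congr diag_mx; apply/rowP => k; rewrite !mxE.
rewrite mulrAC -expr2 exprVn sqrtCK; have [tneg|tNneg] := boolP (t 0 k < 0).
  by rewrite ltr0_norm // invrN mulNr mulVf.
have tpos : 0 < t 0 k by rewrite lt_def tnz real_leNgt ?real0 ?tR.
by rewrite gtr0_norm // mulVf.
Qed.

Lemma pseudo_unitary_diagonalization n (E K : 'M[C]_n) :
    E^t* = E -> E *m E = 1%:M -> K^t* = K -> phys_diagonalizable (E *m K) ->
  exists U (neg : 'I_n -> bool) (l : 'rV_n),
    [/\ l \is a realmx, U *m E *m U^t* = diag_mx (\row_k (-1) ^+ neg k)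
      & U *m (E *m K) = diag_mx l *m U].
Proof.
move=> hE EE hK /phys_diagonalizable_real_similar [P Pu [d dR PD]].
have congrM (X Y Z : 'M[C]_n) : X *m Y *m Z *m (X *m Y)^t* = X *m (Y *m Z *m Y^t*) *m X^t*.
  by rewrite trmx_mul map_mxM !mulmxA.
have PKE : K *m E *m P^t* = P^t* *m diag_mx d.
  have := congr1 (fun M => M^t*) PD; rewrite !trmx_mul !map_mxM /= hE hK.
  by rewrite diag_realmx_hermitian // mulmxA.
have GL : P *m E *m P^t* *m diag_mx d = diag_mx d *m (P *m E *m P^t*).
  by rewrite -mulmxA -PKE !mulmxA -(mulmxA P E K) PD.
have [Q /unitarymxP QQ [t [l [tR lR Gt Ll]]]] := hermitian_codiagonalization
  (hermitian_congruence P hE) (diag_realmx_hermitian dR) GL.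
have tnz k : t 0 k != 0.
  have : diag_mx t \in unitmx.
    have [[Qu _] [Eu _]] := (mulmx1_unit QQ, mulmx1_unit EE).
    by rewrite -Gt !unitmx_mul !map_unitmx !unitmx_tr Pu Qu Eu.
  by rewrite unitmxE det_diag unitfE => /prodf_neq0/(_ k isT).
have [s sR st] := real_diag_normalization tR tnz.
exists (diag_mx s *m Q *m P), (fun k => t 0 k < 0), l; split => //.
  by rewrite !congrM Gt diag_realmx_hermitian.
have Qd : Q *m diag_mx d = diag_mx l *m Q by rewrite -Ll -[RHS]mulmxA (mulmx1C QQ) mulmx1.
by rewrite -!mulmxA PD (mulmxA Q) Qd !mulmxA diag_mxC.
Qed.

Lemma pseudo_unitary_decomposition n (E K U S L : 'M[C]_n) :
    E *m E = 1%:M -> S *m S = 1%:M ->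
    U *m E *m U^t* = S -> U *m (E *m K) = L *m U ->
  K = U^t* *m (S *m L) *m U.
Proof.
move=> EE SS UE UD.
have UES : U *m (E *m U^t* *m S) = 1%:M by rewrite !mulmxA UE SS.
have EU : U^t* *m S *m U = E.
  have /(congr1 (mulmx E)) := mulmx1C UES.
  by rewrite mulmx1 !mulmxA EE mul1mx.
by rewrite -[K]mul1mx -EE -{1}EU -!mulmxA UD !mulmxA.
Qed.

End ComplexMatrices.

Section BogoliubovFrame.
Variables (C : numClosedFieldType) (A : algType C) (N : nat).
Variables (p d : 'I_N -> A) (E K : 'M[C]_N) (c0 : C).
Hypotheses (pp : forall i j, comm (p i) (p j) = 0)
           (dd : forall i j, comm (d i) (d j) = 0)
           (pd : forall i j, comm (p i) (d j) = (E i j)%:A)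
           (Esym : E^T = E) (Ereal : E^c = E) (EE : E *m E = 1%:M)
           (hK : K^t* = K).
Local Notation linop := (linop p d).
Local Notation quad := (quad p d).

(* [p] and [d] stand for psi and psi^dag; the adjoint of [linop u w] is
   represented by [linop w^c u^c]. *)
Definition BV_frame (H : A) (u w : 'I_N -> 'rV[C]_N) (lam : 'I_N -> C) (c : C) :=
  let e k := linop (u k) (w k) in
  let edag k := linop (w k)^c (u k)^c in
  [/\ forall k l, comm (e k) (edag l) = (k == l)%:R,
      forall k l, comm (e k) (e l) = 0,
      forall k, lam k \is Num.real, c \is Num.real &
      H = \sum_k lam k *: (edag k * e k) + c%:A].

Lemma BV_frame_gram H u w lam c : BV_frame H u w lam c ->
  let U := \matrix_k u k in let W := \matrix_k w k in
  U *m E *m W^T = W *m E *m U^T /\ U *m E *m U^t* - W *m E *m W^t* = 1%:M.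
Proof.
move=> [ee' ee _ _ _] U W; split; apply/matrixP => k l.
  rewrite !mulmx_trE !rowK; have := ee k l.
  rewrite (comm_linop pp dd pd Esym) => /eqP.
  by rewrite scaler_eq0 oner_eq0 orbF subr_eq0 => /eqP.
rewrite [LHS]mxE [X in _ + X]mxE -!map_trmx !mulmx_trE -!map_row !rowK mxE.
by apply: (fmorph_inj (in_alg A)); rewrite rmorph_nat /= -ee' (comm_linop pp dd pd Esym).
Qed.

Lemma BV_frame_eigenrows u w lam c : BV_frame (quad K + c0%:A) u w lam c ->
  forall k, u k *m (E *m K) = lam k *: u k /\ (w k)^c *m (E *m K) = - lam k *: (w k)^c.
Proof.
move=> [ee' ee lamR _ hH] k.
have : comm (linop (u k) (w k)) (quad K + c0%:A) = lam k *: linop (u k) (w k).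
  rewrite hH commDr comm_alg addr0 comm_sumr (bigD1 k) //= big1 ?addr0.
    by rewrite commZr commMr ee' ee mulr0 addr0 eqxx mul1r.
  move=> l nlk; rewrite commZr commMr ee' ee mulr0 addr0 eq_sym (negbTE nlk).
  by rewrite mul0r scaler0.
rewrite commDr comm_alg addr0 (comm_linop_quad pp dd pd) -linopZ.
move=> /(linop_inj pp dd pd Esym EE) [uk wk]; split=> //.
move: wk; rewrite trmx_mul Esym mulmxN => /(congr1 (map_mx conjC)).
rewrite map_mxN map_mxM map_mxM Ereal /= hK map_mxZ /= conj_Creal // => wk.
by rewrite scaleNr -wk opprK.
Qed.

Lemma BV_frame_phys_diagonalizable u w lam c :
  BV_frame (quad K + c0%:A) u w lam c -> phys_diagonalizable (E *m K).
Proof.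
move=> frame; have [G1 G2] := BV_frame_gram frame; have [_ _ lamR _ _] := frame.
pose ev (mu : 'I_(N + N)) := match split mu with inl k => lam k | inr k => - lam k end.
apply: (@row_full_eigenrows_phys_diagonalizable _ _ _ _ _ ev
          (pseudo_unitary_row_full Esym Ereal G1 G2)).
  move=> mu; case: (split_ordP mu) => k ->; rewrite /ev ?split_lshift ?split_rshift.
    by rewrite rowKu rowK; case: (BV_frame_eigenrows frame k).
  by rewrite rowKd -map_row rowK; case: (BV_frame_eigenrows frame k).
by move=> mu; rewrite /ev; case: (split mu) => k; rewrite ?rpredN.
Qed.

Section ParticleHoleFrame.
Variables (U : 'M[C]_N) (neg : 'I_N -> bool).
Hypothesis UE : U *m E *m U^t* = diag_mx (\row_k (-1) ^+ neg k).

(* A row of [U] of negative pseudo-norm gives a creation operator, so its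
   adjoint is taken as the annihilator of the frame. *)
Definition ph_u k : 'rV[C]_N := if neg k then 0 else row k U.
Definition ph_w k : 'rV[C]_N := if neg k then (row k U)^c else 0.

Lemma bform_rows k m : bform (row k U) E (row m U)^c = (-1) ^+ neg k *+ (k == m).
Proof. by rewrite map_row -mulmx_trE map_trmx UE !mxE. Qed.

Lemma bform_conj_rows k m : bform (row k U)^c E (row m U) = (-1) ^+ neg k *+ (k == m).
Proof.
have := congr1 conjC (bform_rows k m); rewrite bform_conj map_mxCK Ereal => ->.
by rewrite rmorphMn rmorph_sign.
Qed.

Lemma comm_ph_adj k m :
  comm (linop (ph_u k) (ph_w k)) (linop (ph_w m)^c (ph_u m)^c) = (k == m)%:R.
Proof.
rewrite (comm_linop pp dd pd Esym) /ph_u /ph_w; have [<- | kNm] := eqVneq k m.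
  case nk: (neg k); rewrite ?map_mx0 ?map_mxCK ?bform0l ?bform0r.
    by rewrite bform_conj_rows nk eqxx sub0r -mulNrn opprK -scalerMnl scale1r.
  by rewrite bform_rows nk eqxx subr0 -scalerMnl scale1r.
case: (neg k); case: (neg m); rewrite ?map_mx0 ?map_mxCK ?bform0l ?bform0r;
  by rewrite ?bform_rows ?bform_conj_rows ?(negbTE kNm) ?mulr0n subrr scale0r.
Qed.

Lemma comm_ph k m : comm (linop (ph_u k) (ph_w k)) (linop (ph_u m) (ph_w m)) = 0.
Proof.
rewrite (comm_linop pp dd pd Esym) /ph_u /ph_w; have [<- | kNm] := eqVneq k m.
  by case: (neg k); rewrite ?bform0l ?bform0r subrr scale0r.
case: (neg k); case: (neg m); rewrite ?map_mx0 ?map_mxCK ?bform0l ?bform0r;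
  by rewrite ?bform_rows ?bform_conj_rows ?(negbTE kNm) ?mulr0n subrr scale0r.
Qed.

Lemma ph_adj_mul k :
  linop (ph_w k)^c (ph_u k)^c * linop (ph_u k) (ph_w k) =
  quad (((row k U)^c)^T *m row k U) + (if neg k then -1 else 0)%:A.
Proof.
rewrite /ph_u /ph_w; case nk: (neg k); rewrite ?map_mx0 ?map_mxCK linop0l linop0r.
  by rewrite mul_commE mul_lcomb_quad (comm_lcomb _ _ pd) bform_rows nk eqxx mulr1n.
by rewrite mul_lcomb_quad scale0r addr0.
Qed.

Lemma BV_frame_of_pseudo_unitary (l : 'rV[C]_N) :
    l \is a realmx -> c0 \is Num.real ->
    K = U^t* *m (diag_mx (\row_k (-1) ^+ neg k) *m diag_mx l) *m U ->
  BV_frame (quad K + c0%:A) ph_u ph_w (fun k => (-1) ^+ neg k * l 0 k)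
           (c0 - \sum_k (if neg k then l 0 k else 0)).
Proof.
move=> /mxOverP lR c0R hKU; split; [exact: comm_ph_adj | exact: comm_ph | | |].
- by move=> k; rewrite rpredM ?rpredX ?rpredN ?rpred1 ?lR.
- by rewrite rpredB // rpred_sum // => k _; case: (neg k); rewrite ?lR ?rpred0.
have -> : K = \sum_k ((-1) ^+ neg k * l 0 k) *: (((row k U)^c)^T *m row k U).
  rewrite {1}hKU mulmx_diag -map_trmx mulmx_diag_rows; apply: eq_bigr => k _.
  by rewrite !mxE map_row.
have sum_neg : \sum_k (-1) ^+ neg k * l 0 k * (if neg k then -1 else 0) =
               \sum_k (if neg k then l 0 k else 0).
  by apply: eq_bigr => k _; case: (neg k); rewrite ?mulr0 // expr1 mulN1r mulrN1 opprK.
rewrite quad_sum; under [in RHS]eq_bigr do rewrite ph_adj_mul scalerDr -quadZ scalerA.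
by rewrite big_split /= -scaler_suml sum_neg -addrA -scalerDl [_ + (c0 - _)]addrC subrK.
Qed.

End ParticleHoleFrame.

Lemma phys_diagonalizable_BV_frame : c0 \is Num.real -> phys_diagonalizable (E *m K) ->
  exists u w lam c, BV_frame (quad K + c0%:A) u w lam c.
Proof.
move=> c0R Dphys; have hE : E^t* = E by rewrite Esym Ereal.
have [U [neg [l [lR UE UD]]]] := pseudo_unitary_diagonalization hE EE hK Dphys.
pose S : 'M[C]_N := diag_mx (\row_k (-1) ^+ neg k).
have SS : S *m S = 1%:M.
  rewrite mulmx_diag -diag_const_mx; congr diag_mx.
  by apply/rowP => k; rewrite !mxE -signr_addb addbb.
by do 4!eexists; apply: BV_frame_of_pseudo_unitary lR c0R
  (pseudo_unitary_decomposition EE SS UE UD).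
Qed.

End BogoliubovFrame.

Definition eta_mx {C : numClosedFieldType} {n : nat} : 'M[C]_(n + n) :=
  block_mx 1%:M 0 0 (-1)%:M.

Lemma eta_mx_tr {C : numClosedFieldType} {n : nat} : (@eta_mx C n)^T = eta_mx.
Proof. by rewrite /eta_mx tr_block_mx !trmx0 !tr_scalar_mx. Qed.
Lemma eta_mx_conj {C : numClosedFieldType} {n : nat} : (@eta_mx C n)^c = eta_mx.
Proof. by rewrite /eta_mx map_block_mx !map_mx0 !map_scalar_mx /= rmorph1 rmorphN1. Qed.
Lemma eta_mx_mul {C : numClosedFieldType} {n : nat} : @eta_mx C n *m eta_mx = 1%:M.
Proof.
rewrite /eta_mx mulmx_block !mulmx0 !mul0mx !addr0 !add0r -!scalar_mxM mulr1 mulrNN mulr1.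
by rewrite -scalar_mx_block.
Qed.

Section Bosons.
Variables (C : numClosedFieldType) (A : algType C) (n : nat).
Variables (a ad b bd : 'I_n -> A).
Hypothesis hCCR : CCR a ad b bd.

Definition psi_adj (mu : 'I_(n + n)) : A :=
  match split mu with inl i => ad i | inr i => b i end.

Lemma psi_lshift i : psi a bd (lshift n i) = a i.
Proof. by rewrite /psi split_lshift. Qed.
Lemma psi_rshift i : psi a bd (rshift n i) = bd i.
Proof. by rewrite /psi split_rshift. Qed.
Lemma psi_adj_lshift i : psi_adj (lshift n i) = ad i.
Proof. by rewrite /psi_adj split_lshift. Qed.
Lemma psi_adj_rshift i : psi_adj (rshift n i) = b i.
Proof. by rewrite /psi_adj split_rshift. Qed.

Lemma CCR_psi mu nu : comm (psi a bd mu) (psi a bd nu) = 0.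
Proof.
case: (split_ordP mu) => i ->; case: (split_ordP nu) => j ->;
  rewrite ?psi_lshift ?psi_rshift.
- by case: (hCCR i j) => _ _ ->.
- by case: (hCCR i j) => _ _ _ _ [_ _ _ -> _].
- by case: (hCCR j i) => _ _ _ _ [_ _ _ abd _]; rewrite commC abd oppr0.
- by case: (hCCR i j) => _ _ _ _ [_ -> _ _ _].
Qed.

Lemma CCR_psi_adj mu nu : comm (psi_adj mu) (psi_adj nu) = 0.
Proof.
case: (split_ordP mu) => i ->; case: (split_ordP nu) => j ->;
  rewrite ?psi_adj_lshift ?psi_adj_rshift.
- by case: (hCCR i j) => _ _ _ ->.
- by case: (hCCR i j) => _ _ _ _ [_ _ _ _ [-> _]].
- by case: (hCCR j i) => _ _ _ _ [_ _ _ _ [adb _]]; rewrite commC adb oppr0.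
- by case: (hCCR i j) => _ _ _ _ [-> _ _ _ _].
Qed.

Lemma CCR_psi_psi_adj mu nu : comm (psi a bd mu) (psi_adj nu) = (eta_mx mu nu)%:A.
Proof.
case: (split_ordP mu) => i ->; case: (split_ordP nu) => j ->;
  rewrite ?psi_lshift ?psi_rshift ?psi_adj_lshift ?psi_adj_rshift /eta_mx
          ?block_mxEul ?block_mxEur ?block_mxEdl ?block_mxEdr !mxE ?scale0r.
- by case: (hCCR i j) => -> _ _ _ _; rewrite -scalerMnl scale1r.
- by case: (hCCR i j) => _ _ _ _ [_ _ -> _ _].
- by case: (hCCR j i) => _ _ _ _ [_ _ _ _ [_ adbd]]; rewrite commC adbd oppr0.
- case: (hCCR j i) => _ bbd _ _ _; rewrite commC bbd eq_sym.
  by rewrite -scalerMnl scaleN1r mulNrn.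
Qed.

(* The eps block is transposed, and a trace of eps is left over, because
   b_i^dag b_j = b_j b_i^dag - delta_ij. *)
Definition ham_mx (alpha eps gamma : 'M[C]_n) : 'M[C]_(n + n) :=
  block_mx alpha gamma gamma^c eps^T.

Lemma hamiltonianE (alpha eps gamma : 'M[C]_n) :
  hamiltonian a ad b bd alpha eps gamma =
  quad (psi a bd) psi_adj (ham_mx alpha eps gamma) + (- \sum_i eps i i)%:A.
Proof.
have ba i j : b j * a i = a i * b j.
  by case: (hCCR i j) => _ _ _ _ [_ _ ab _ _]; rewrite mul_commE commC ab oppr0 addr0.
have bbd i j : b j * bd i = bd i * b j + (j == i)%:R.
  by case: (hCCR j i) => _ bbd _ _ _; rewrite mul_commE bbd.
have quadE : quad (psi a bd) psi_adj (ham_mx alpha eps gamma) =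
      \sum_i \sum_j alpha i j *: (ad i * a j) + \sum_i \sum_j gamma i j *: (ad i * bd j)
    + (\sum_i \sum_j (gamma i j)^* *: (b i * a j) + \sum_i \sum_j eps j i *: (b i * bd j)).
  rewrite /quad big_split_ord /= -[X in _ = X + _]big_split -[X in _ = _ + X]big_split.
  congr (_ + _); apply: eq_bigr => i _;
    rewrite big_split_ord /=; congr (_ + _); apply: eq_bigr => j _;
    by rewrite /ham_mx ?block_mxEul ?block_mxEur ?block_mxEdl ?block_mxEdr ?mxE
      ?psi_lshift ?psi_rshift ?psi_adj_lshift ?psi_adj_rshift.
have gammaE : \sum_i \sum_j (gamma i j)^* *: (b i * a j) =
              \sum_i \sum_j (gamma j i)^* *: (a i * b j).
  by rewrite exchange_big; apply: eq_bigr => i _; apply: eq_bigr => j _; rewrite ba.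
have epsE : \sum_i \sum_j eps j i *: (b i * bd j) =
            \sum_i \sum_j eps i j *: (bd i * b j) + (\sum_i eps i i)%:A.
  transitivity (\sum_i \sum_j (eps i j *: (bd i * b j) + eps i j *: (j == i)%:R)).
    rewrite exchange_big; apply: eq_bigr => i _; apply: eq_bigr => j _.
    by rewrite bbd scalerDr.
  under eq_bigr do rewrite big_split; rewrite big_split /= scaler_suml; congr (_ + _).
  apply: eq_bigr => i _; rewrite (bigD1 i) //= eqxx big1 ?addr0 // => j /negbTE ->.
  by rewrite scaler0.
rewrite quadE gammaE epsE /hamiltonian; under eq_bigr do rewrite !big_split.
rewrite !big_split /= scaleNr !addrA addrK.
by rewrite [X in X + _ = _]addrAC [LHS]addrAC.
Qed.

Lemma ham_mx_hermitian (alpha eps gamma : 'M[C]_n) :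
    (forall i j, alpha j i = (alpha i j)^*) ->
    (forall i j, eps j i = (eps i j)^*) ->
    (forall i j, gamma j i = gamma i j) ->
  (ham_mx alpha eps gamma)^t* = ham_mx alpha eps gamma.
Proof.
move=> ha he hg; apply/matrixP => mu nu; rewrite mxE [_^T _ _]mxE /ham_mx.
case: (split_ordP mu) => i ->; case: (split_ordP nu) => j ->;
  rewrite ?block_mxEul ?block_mxEur ?block_mxEdl ?block_mxEdr ?mxE.
- by rewrite ha conjCK.
- by rewrite conjCK hg.
- by rewrite hg.
- by rewrite he conjCK.
Qed.

Definition rowcat (f g : 'I_n -> C) : 'rV[C]_(n + n) := row_mx (\row_i f i) (\row_i g i).

Lemma rowcat_split (u : 'rV[C]_(n + n)) :
  rowcat (fun i => u 0 (lshift n i)) (fun i => u 0 (rshift n i)) = u.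
Proof.
apply/rowP => mu; case: (split_ordP mu) => i ->.
  by rewrite row_mxEl mxE.
by rewrite row_mxEr mxE.
Qed.

Lemma lcomb_rowcat (F : 'I_(n + n) -> A) (f g : 'I_n -> C) :
  lcomb F (rowcat f g) = \sum_i f i *: F (lshift n i) + \sum_i g i *: F (rshift n i).
Proof.
rewrite /lcomb big_split_ord /=; congr (_ + _); apply: eq_bigr => i _.
  by rewrite row_mxEl mxE.
by rewrite row_mxEr mxE.
Qed.

Lemma lcomb_psi (f g : 'I_n -> C) :
  lcomb (psi a bd) (rowcat f g) = \sum_i f i *: a i + \sum_i g i *: bd i.
Proof.
rewrite lcomb_rowcat; congr (_ + _); apply: eq_bigr => i _.
  by rewrite psi_lshift.
by rewrite psi_rshift.
Qed.

Lemma lcomb_psi_adj (f g : 'I_n -> C) :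
  lcomb psi_adj (rowcat f g) = \sum_i f i *: ad i + \sum_i g i *: b i.
Proof.
rewrite lcomb_rowcat; congr (_ + _); apply: eq_bigr => i _.
  by rewrite psi_adj_lshift.
by rewrite psi_adj_rshift.
Qed.

Lemma lincombE (p q r s : 'I_n -> C) :
  lincomb a ad b bd p q r s = linop (psi a bd) psi_adj (rowcat p s) (rowcat q r).
Proof.
rewrite /lincomb /linop lcomb_psi lcomb_psi_adj !big_split /=.
by rewrite [in RHS]addrACA [\sum_i s i *: bd i + _]addrC !addrA.
Qed.

Lemma rowcat_conj (f g : 'I_n -> C) :
  (rowcat f g)^c = rowcat (fun i => (f i)^*) (fun i => (g i)^*).
Proof. by rewrite map_row_mx; congr row_mx; apply/rowP => i; rewrite !mxE. Qed.

Lemma lincomb_adjE (p q r s : 'I_n -> C) :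
  lincomb_adj a ad b bd p q r s =
  linop (psi a bd) psi_adj (rowcat q r)^c (rowcat p s)^c.
Proof. by rewrite /lincomb_adj lincombE !rowcat_conj. Qed.

Lemma BV_diagonalizableE (H : A) :
  BV_diagonalizable a ad b bd H <->
  exists u w lam c, BV_frame (psi a bd) psi_adj H u w lam c.
Proof.
split=> [[P [Q [R [S [lam [c /= [ee' ee lamR cR hH]]]]]]] |
         [u [w [lam [c /= [ee' ee lamR cR hH]]]]]].
  exists (fun k => rowcat (P k) (S k)), (fun k => rowcat (Q k) (R k)), lam, c.
  split=> // [k l|k l|]; rewrite -?lincomb_adjE -?lincombE //.
  by rewrite hH; congr (_ + _); apply: eq_bigr => k _; rewrite -lincomb_adjE -lincombE.
pose P k i := u k 0 (lshift n i); pose S k i := u k 0 (rshift n i).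
pose Q k i := w k 0 (lshift n i); pose R k i := w k 0 (rshift n i).
have PS k : rowcat (P k) (S k) = u k := rowcat_split (u k).
have QR k : rowcat (Q k) (R k) = w k := rowcat_split (w k).
exists P, Q, R, S, lam, c => /=.
split=> // [k l|k l|]; rewrite ?lincomb_adjE ?lincombE ?PS ?QR //.
by rewrite hH; congr (_ + _); apply: eq_bigr => k _; rewrite lincomb_adjE lincombE PS QR.
Qed.

Lemma dynamic_matrixE (K D : 'M[C]_(n + n)) (c0 : C) :
  is_dynamic_matrix a bd (quad (psi a bd) psi_adj K + c0%:A) D -> D = eta_mx *m K.
Proof.
have [[pp dd] pd] := (CCR_psi, CCR_psi_adj, CCR_psi_psi_adj).
move=> hD; apply/row_matrixP => mu; have := hD mu.
rewrite -[psi a bd mu](lcomb_delta _ mu) -(linop0r _ psi_adj) commDr comm_alg addr0.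
rewrite (comm_linop_quad pp dd pd) mul0mx -rowE => hrow.
suff /(linop_inj pp dd pd eta_mx_tr eta_mx_mul) [] :
    linop (psi a bd) psi_adj (row mu D) 0 =
    linop (psi a bd) psi_adj (row mu (eta_mx *m K)) 0 by [].
by rewrite hrow linop0r; apply: eq_bigr => nu _; rewrite mxE.
Qed.

End Bosons.

Theorem proposition5 (C : numClosedFieldType) (A : algType C) (n : nat)
    (a ad b bd : 'I_n -> A) (alpha eps gamma : 'M[C]_n) (D : 'M[C]_(n + n)) :
  CCR a ad b bd ->
  (forall i j, alpha j i = (alpha i j)^*) ->
  (forall i j, eps j i = (eps i j)^*) ->
  (forall i j, gamma j i = gamma i j) ->
  is_dynamic_matrix a bd (hamiltonian a ad b bd alpha eps gamma) D ->
  (BV_diagonalizable a ad b bd (hamiltonian a ad b bd alpha eps gamma)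
   <-> phys_diagonalizable D).
Proof.
move=> hCCR ha he hg hD.
have [[pp dd] pd] := (CCR_psi hCCR, CCR_psi_adj hCCR, CCR_psi_psi_adj hCCR).
have hK := ham_mx_hermitian ha he hg.
have c0R : - \sum_i eps i i \is Num.real.
  by rewrite rpredN rpred_sum // => i _; apply/CrealP; rewrite -he.
rewrite (hamiltonianE hCCR) in hD *.
rewrite (dynamic_matrixE hCCR hD) BV_diagonalizableE.
split=> [[u [w [lam [c frame]]]] | Dphys].
  exact: (BV_frame_phys_diagonalizable pp dd pd eta_mx_tr eta_mx_conj eta_mx_mul hK frame).
exact: (phys_diagonalizable_BV_frame pp dd pd eta_mx_tr eta_mx_conj eta_mx_mul hK c0R Dphys).
Qed.
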